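(* Let $\mathbf{Grph}=[\mathbb G_1^{\mathrm{op}},\mathbf{Set}]$ and let $\mathsf T$ be the monad on $\mathbf{Grph}$ whose algebras are (small) groupoids. Then $\mathsf T$ is $\Delta_0$-nervous, but its underlying endofunctor is not $\Delta_0$-induced. Consequently $\mathsf T$ does not have arities $\Delta_0$.
   Context: Here $\mathcal V=\mathbf{Set}$. $\mathbb G_1$ is the category freely generated by two parallel arrows $\sigma,\tau\colon 0\rightrightarrows 1$, so $\mathbf{Grph}$ is the category of directed multigraphs. $\Delta_0$ is the full subcategory of $\mathbf{Grph}$ on the graphs $[n]=(0\to 1\to\cdots\to n)$ for $n\ge 0$; it is small and dense, and $K\colon\Delta_0\hookrightarrow\mathbf{Grph}$ denotes the inclusion, with nerve $N_K(X)=\mathbf{Grph}(K-,X)$; a $K$-nerve is a presheaf in its essential image (likewise for other functors $H$ with small domain). The monad $\mathsf T$ is the one induced by the free-forgetful adjunction between groupoids and graphs. For a monad $\mathsf T$, let $\Delta_0\xrightarrow{J_{\mathsf T}}\mathcal A_{\mathsf T}\xrightarrow{K_{\mathsf T}}\mathbf{Grph}^{\mathsf T}$ be the (identity-on-objects, fully faithful) factorisation of $F^{\mathsf T}K$; $\mathsf T$ is $\Delta_0$-nervous if $K_{\mathsf T}$ is dense (i.e. $N_{K_{\mathsf T}}$ fully faithful) and a presheaf $X$ on $\mathcal A_{\mathsf T}$ is a $K_{\mathsf T}$-nerve iff $X\circ J_{\mathsf T}^{\mathrm{op}}$ is a $K$-nerve. An endofunctor $T$ of $\mathbf{Grph}$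 is $\Delta_0$-induced if it is the pointwise left Kan extension along $K$ of $TK$; it has arities $\Delta_0$ if $N_KT$ is the left Kan extension along $K$ of $N_KTK$; a monad has arities $\Delta_0$ if its underlying endofunctor does. *)

From mathcomp Require Import all_boot.

Set Implicit Arguments.
Unset Strict Implicit.
Unset Printing Implicit Defensive.

(* Directed multigraphs = presheaves on G_1 (a set of vertices, a set  *)
(* of edges, source and target maps) and their morphisms.              *)

Record graph := Graph {
  gV : Type;
  gE : Type;
  gsrc : gE -> gV;
  gtgt : gE -> gV }.

Record ghom (X Y : graph) := GHom {
  hV : gV X -> gV Y;
  hE : gE X -> gE Y;
  hsrc : forall e, gsrc (hE e) = hV (gsrc e);
  htgt : forall e, gtgt (hE e) = hV (gtgt e) }.

Definition gid (X : graph) : ghom X X :=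
  @GHom X X (fun v => v) (fun e => e) (fun _ => erefl) (fun _ => erefl).

Definition gcomp (X Y Z : graph) (g : ghom Y Z) (f : ghom X Y) : ghom X Z :=
  @GHom X Z (fun v => hV g (hV f v)) (fun e => hE g (hE f e))
    (fun e => eq_trans (hsrc g (hE f e)) (f_equal (hV g) (hsrc f e)))
    (fun e => eq_trans (htgt g (hE f e)) (f_equal (hV g) (htgt f e))).

(* The graph [n] = (0 -> 1 -> ... -> n): vertices 0..n, edge i : i -> i+1. *)
Definition gn (n : nat) : graph :=
  @Graph 'I_n.+1 'I_n (fun i => widen_ord (leqnSn n) i) (fun i => lift ord0 i).

(* Small groupoids, presented on their underlying graph (objects =     *)
(* vertices, morphisms = edges).  Composition is a total operation     *)
(* whose value is only constrained on composable pairs.                 *)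

Record groupoid := Groupoid {
  gpd :> graph;
  gpd_id : gV gpd -> gE gpd;
  gpd_comp : gE gpd -> gE gpd -> gE gpd;
  gpd_inv : gE gpd -> gE gpd;
  gpd_id_src : forall x, gsrc (gpd_id x) = x;
  gpd_id_tgt : forall x, gtgt (gpd_id x) = x;
  gpd_comp_src : forall f g, gtgt f = gsrc g -> gsrc (gpd_comp g f) = gsrc f;
  gpd_comp_tgt : forall f g, gtgt f = gsrc g -> gtgt (gpd_comp g f) = gtgt g;
  gpd_compA : forall f g h, gtgt f = gsrc g -> gtgt g = gsrc h ->
      gpd_comp h (gpd_comp g f) = gpd_comp (gpd_comp h g) f;
  gpd_id_l : forall f, gpd_comp (gpd_id (gtgt f)) f = f;
  gpd_id_r : forall f, gpd_comp f (gpd_id (gsrc f)) = f;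
  gpd_inv_src : forall f, gsrc (gpd_inv f) = gtgt f;
  gpd_inv_tgt : forall f, gtgt (gpd_inv f) = gsrc f;
  gpd_inv_l : forall f, gpd_comp (gpd_inv f) f = gpd_id (gsrc f);
  gpd_inv_r : forall f, gpd_comp f (gpd_inv f) = gpd_id (gtgt f) }.

Record gfunctor (G H : groupoid) := GFunctor {
  fh : ghom G H;
  fid : forall x, hE fh (gpd_id x) = gpd_id (hV fh x);
  fcomp : forall f g, gtgt f = gsrc g ->
      hE fh (gpd_comp g f) = gpd_comp (hE fh g) (hE fh f) }.

Definition gfid (G : groupoid) : gfunctor G G :=
  @GFunctor G G (gid G) (fun _ => erefl) (fun _ _ _ => erefl).

Definition gfcomp (G H K : groupoid) (psi : gfunctor H K) (phi : gfunctor G H) :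
  gfunctor G K.
Proof.
refine (@GFunctor G K (gcomp (fh psi) (fh phi)) _ _).
- move=> x /=; rewrite (fid phi) (fid psi); reflexivity.
- move=> f g Hfg /=.
  have H' : gtgt (hE (fh phi) f) = gsrc (hE (fh phi) g)
    by rewrite (htgt (fh phi)) (hsrc (fh phi)) Hfg.
  rewrite (fcomp phi Hfg) (fcomp psi H'); reflexivity.
Defined.

(* The free groupoid on a graph, given by its universal property       *)
(* (left adjoint F to the forgetful functor U : Gpd -> Grph, with unit  *)
(* eta).  The monad T is U F.                                           *)

Record free_groupoid := FreeGroupoid {
  FG : graph -> groupoid;
  fg_eta : forall X : graph, ghom X (FG X);
  fg_ext : forall (X : graph) (G : groupoid), ghom X G -> gfunctor (FG X) G;
  fg_ext_eta : forall (X : graph) (G : groupoid) (f : ghom X G),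
      gcomp (fh (fg_ext f)) (fg_eta X) = f;
  fg_ext_unique : forall (X : graph) (G : groupoid) (f : ghom X G)
      (phi : gfunctor (FG X) G),
      gcomp (fh phi) (fg_eta X) = f -> phi = fg_ext f }.

Section Monad.
Variable F : free_groupoid.

Definition Tob (X : graph) : graph := gpd (FG F X).

Definition Fmap (X Y : graph) (f : ghom X Y) : gfunctor (FG F X) (FG F Y) :=
  @fg_ext F X (FG F Y) (gcomp (fg_eta F Y) f).

Definition Tmap (X Y : graph) (f : ghom X Y) : ghom (Tob X) (Tob Y) :=
  fh (Fmap f).

End Monad.

Record precat := Precat {
  Ob : Type;
  Hom : Ob -> Ob -> Type;
  cid : forall a, Hom a a;
  ccomp : forall a b c, Hom b c -> Hom a b -> Hom a c }.

Record rpsh (C : precat) := RPsh {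
  pob : Ob C -> Type;
  pact : forall a b : Ob C, @Hom C a b -> pob b -> pob a }.

Definition is_presheaf (C : precat) (P : rpsh C) : Prop :=
  (forall a (x : pob P a), pact (cid a) x = x) /\
  (forall a b c (g : @Hom C b c) (f : @Hom C a b) (x : pob P c),
      pact (ccomp g f) x = pact f (pact g x)).

Definition natural (C : precat) (P Q : rpsh C)
    (alpha : forall a, pob P a -> pob Q a) : Prop :=
  forall a b (f : @Hom C a b) (x : pob P b),
    alpha a (pact f x) = pact f (alpha b x).

Definition nat_iso (C : precat) (P Q : rpsh C) : Prop :=
  exists alpha : forall a, pob P a -> pob Q a,
    natural alpha /\ forall a, bijective (alpha a).

(* Delta_0 : full subcategory of Grph on the [n]; K its inclusion. *)
Definition Delta0 : precat :=
  @Precat nat (fun n m => ghom (gn n) (gn m)) (fun n => gid (gn n))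
          (fun a b c g f => gcomp g f).

Definition NK (Z : graph) : rpsh Delta0 :=
  @RPsh Delta0 (fun n => ghom (gn n) Z) (fun a b f x => gcomp x f).

Definition is_K_nerve (P : rpsh Delta0) : Prop :=
  exists Z : graph, nat_iso P (NK Z).

Section Nervous.
Variable F : free_groupoid.

(* A_T : full subcategory of Grph^T (= groupoids) on the free algebras
   F[n]; J_T : Delta_0 -> A_T is F on morphisms; K_T the inclusion. *)
Definition AT : precat :=
  @Precat nat (fun n m => gfunctor (FG F (gn n)) (FG F (gn m)))
          (fun n => gfid (FG F (gn n)))
          (fun a b c g f => gfcomp g f).

Definition JT (n m : nat) (f : ghom (gn n) (gn m)) : @Hom AT n m := Fmap F f.

Definition NKT (G : groupoid) : rpsh AT :=
  @RPsh AT (fun n => gfunctor (FG F (gn n)) G) (fun a b f x => gfcomp x f).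

Definition restrJ (X : rpsh AT) : rpsh Delta0 :=
  @RPsh Delta0 (fun n => pob X n) (fun a b f x => pact (JT f) x).

Definition is_KT_nerve (X : rpsh AT) : Prop :=
  exists G : groupoid, nat_iso X (NKT G).

(* K_T dense: N_{K_T} is fully faithful, i.e. every natural transformation
   N_{K_T} G => N_{K_T} H is N_{K_T} phi for a unique functor phi. *)
Definition KT_dense : Prop :=
  forall (G H : groupoid) (alpha : forall n, pob (NKT G) n -> pob (NKT H) n),
    natural alpha ->
    exists phi : gfunctor G H,
      (forall n x, alpha n x = gfcomp phi x) /\
      (forall phi' : gfunctor G H,
          (forall n x, alpha n x = gfcomp phi' x) -> phi' = phi).

Definition Delta0_nervous : Prop :=
  KT_dense /\
  forall X : rpsh AT, is_presheaf X ->
    (is_KT_nerve X <-> is_K_nerve (restrJ X)).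

(* T is Delta_0-induced: for every graph X, TX together with the maps
   T x : T[n] -> TX (x : [n] -> X) is a colimit of T K over K/X, i.e.
   T is the pointwise left Kan extension of TK along K. *)
Definition Delta0_induced : Prop :=
  forall (X Y : graph) (c : forall n, ghom (gn n) X -> ghom (Tob F (gn n)) Y),
    (forall n m (f : ghom (gn n) (gn m)) (y : ghom (gn m) X),
        c n (gcomp y f) = gcomp (c m y) (Tmap F f)) ->
    exists u : ghom (Tob F X) Y,
      (forall n (x : ghom (gn n) X), gcomp u (Tmap F x) = c n x) /\
      (forall u' : ghom (Tob F X) Y,
          (forall n (x : ghom (gn n) X), gcomp u' (Tmap F x) = c n x) -> u' = u).

(* T has arities Delta_0: N_K T is the (pointwise) left Kan extension of
   N_K T K along K, i.e. for every graph X the presheaf N_K(TX) with the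
   maps N_K(T x) is a colimit in [Delta_0^op, Set] over K/X. *)
Definition has_arities : Prop :=
  forall (X : graph) (Y : rpsh Delta0), is_presheaf Y ->
  forall c : forall n, ghom (gn n) X -> forall k, pob (NK (Tob F (gn n))) k -> pob Y k,
    (forall n x, natural (c n x)) ->
    (forall n m (f : ghom (gn n) (gn m)) (y : ghom (gn m) X) k
            (g : ghom (gn k) (Tob F (gn n))),
        c n (gcomp y f) k g = c m y k (gcomp (Tmap F f) g)) ->
    exists u : forall k, pob (NK (Tob F X)) k -> pob Y k,
      natural u /\
      (forall n (x : ghom (gn n) X) k g, u k (gcomp (Tmap F x) g) = c n x k g) /\
      (forall u' : forall k, pob (NK (Tob F X)) k -> pob Y k,
          natural u' ->
          (forall n (x : ghom (gn n) X) k g, u' k (gcomp (Tmap F x) g) = c n x k g) ->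
          forall k g, u' k g = u k g).

End Nervous.

From mathcomp Require Import all_boot.
From Stdlib Require Import ProofIrrelevance FunctionalExtensionality ClassicalEpsilon.

Set Implicit Arguments.
Unset Strict Implicit.
Unset Printing Implicit Defensive.

(* The free groupoid F[n] on the path graph [n] is the codiscrete groupoid on
   {0, ..., n}; hence functors F[n] -> F[m] are arbitrary maps of vertices, and
   A_T is the category of finite nonempty ordinals with all maps.
   Density: a natural family of maps between path sets is determined on [0] and
   [1], and naturality along [1] -> [0] and along [1] -> [2], (0, 1) |-> (0, 2),
   makes the induced map of graphs a functor.
   Nerves: if X o J_T is the nerve of a graph Z, restricting an element of X[m]
   along [1] -> [m], (0, 1) |-> (i, j), gives an arrow of Z for every pair i, j;
   the non-monotone maps [1] -> [0], the swap of [1] and [1] -> [2] provide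
   identities, inverses and composites, and elements of X[3] give associativity.
   Induction fails for the cospan 0 -> 1 <- 2: its paths have length at most 1,
   so mapping each T[n] through the codiscrete graph on its path's vertices
   gives a cocone into the codiscrete graph on nat without arrows between 0
   and 2, while T(cospan) contains an arrow 0 -> 2 (one edge followed by the
   inverse of the other).  Taking nerves of this cocone refutes arities. *)

Lemma ghom_ext (X Y : graph) (f g : ghom X Y) :
  (forall v, hV f v = hV g v) -> (forall e, hE f e = hE g e) -> f = g.
Proof.
case: f g => fV fE fs ft [gV' gE' gs gt] /= eqV eqE.
move: (functional_extensionality _ _ eqV) (functional_extensionality _ _ eqE) => ??.
by subst; f_equal; apply: proof_irrelevance.
Qed.

Lemma gfunctor_ext (G H : groupoid) (p q : gfunctor G H) : fh p = fh q -> p = q.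
Proof. by case: p q => p ? ? [q ? ?] /= eq_pq; subst; f_equal; apply: proof_irrelevance. Qed.

Lemma gfcompV (G H K : groupoid) (q : gfunctor H K) (p : gfunctor G H) v :
  hV (fh (gfcomp q p)) v = hV (fh q) (hV (fh p) v).
Proof. by []. Qed.

Lemma gfcompE (G H K : groupoid) (q : gfunctor H K) (p : gfunctor G H) e :
  hE (fh (gfcomp q p)) e = hE (fh q) (hE (fh p) e).
Proof. by []. Qed.

Definition gvertex (Z : graph) (v : gV Z) : ghom (gn 0) Z :=
  @GHom (gn 0) Z (fun _ => v) (fun e => match notF (ltn_ord e) with end)
    (fun e => match notF (ltn_ord e) with end) (fun e => match notF (ltn_ord e) with end).

Definition pair_map (A : Type) (a b : A) (k : 'I_2) : A :=
  if nat_of_ord k is 0 then a else b.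

Definition triple_map (A : Type) (a b c : A) (k : 'I_3) : A :=
  match nat_of_ord k with 0 => a | 1 => b | _ => c end.

Lemma pair_map_src (A : Type) (a b : A) (k : 'I_1) : a = pair_map a b (widen_ord (leqnSn 1) k).
Proof. by case: k => -[]. Qed.

Definition gedge (Z : graph) (e : gE Z) : ghom (gn 1) Z :=
  @GHom (gn 1) Z (pair_map (gsrc e) (gtgt e)) (fun _ => e) (fun=> pair_map_src _ _ _)
    (fun _ => erefl).

Lemma gpath2_src (Z : graph) (f g : gE Z) (fg : gtgt f = gsrc g) (k : 'I_2) :
  gsrc (pair_map f g k) = triple_map (gsrc f) (gtgt f) (gtgt g) (widen_ord (leqnSn 2) k).
Proof. by case: k => -[|[|//]]. Qed.

Lemma gpath2_tgt (Z : graph) (f g : gE Z) (k : 'I_2) :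
  gtgt (pair_map f g k) = triple_map (gsrc f) (gtgt f) (gtgt g) (lift ord0 k).
Proof. by case: k => -[|[|//]]. Qed.

Definition gpath2 (Z : graph) (f g : gE Z) (fg : gtgt f = gsrc g) : ghom (gn 2) Z :=
  @GHom (gn 2) Z (triple_map (gsrc f) (gtgt f) (gtgt g)) (pair_map f g) (gpath2_src fg)
    (@gpath2_tgt Z f g).

Lemma gpath_exists (Z : graph) n (es : nat -> gE Z) :
  (forall k, k.+1 < n -> gtgt (es k) = gsrc (es k.+1)) ->
  exists p : ghom (gn n) Z, forall e : 'I_n, hE p e = es e.
Proof.
move=> chain; pose pV (i : 'I_n.+1) := if val i is k.+1 then gtgt (es k) else gsrc (es 0).
have srcP (e : 'I_n) : gsrc (es e) = pV (widen_ord (leqnSn n) e).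
  by case: e => -[|k] // lt_k_n; symmetry; apply: chain.
by exists (@GHom (gn n) Z pV (fun e => es e) srcP (fun _ => erefl)).
Qed.

Definition codiscrete_graph (V : Type) : graph := @Graph V (V * V) fst snd.

Definition codiscrete (V : Type) : groupoid.
Proof.
refine (@Groupoid (codiscrete_graph V) (fun x => (x, x)) (fun g f => (f.1, g.2))
          (fun f => (f.2, f.1)) _ _ _ _ _ _ _ _ _ _ _) => //; by case.
Defined.

Lemma codiscrete_thin V (e e' : gE (codiscrete V)) :
  gsrc e = gsrc e' -> gtgt e = gtgt e' -> e = e'.
Proof. by case: e e' => a b [c d] /= -> ->. Qed.

Definition codiscrete_map V W (s : V -> W) : gfunctor (codiscrete V) (codiscrete W) :=
  @GFunctor (codiscrete V) (codiscrete W)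
    (@GHom (codiscrete_graph V) (codiscrete_graph W) s (fun p => (s p.1, s p.2))
       (fun _ => erefl) (fun _ => erefl))
    (fun _ => erefl) (fun _ _ _ => erefl).

Section FreeGroupoid.
Variable F : free_groupoid.

Local Notation eta X := (fg_eta F X).

Lemma fg_ext_etaV (X : graph) (G : groupoid) (f : ghom X G) v :
  hV (fh (fg_ext F f)) (hV (eta X) v) = hV f v.
Proof. exact: (f_equal (fun h => hV h v) (fg_ext_eta F f)). Qed.

Lemma fg_ext_etaE (X : graph) (G : groupoid) (f : ghom X G) e :
  hE (fh (fg_ext F f)) (hE (eta X) e) = hE f e.
Proof. exact: (f_equal (fun h => hE h e) (fg_ext_eta F f)). Qed.

Lemma fg_extE (X : graph) (G : groupoid) (p : gfunctor (FG F X) G) :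
  fg_ext F (gcomp (fh p) (eta X)) = p.
Proof. exact/esym/fg_ext_unique. Qed.

Lemma gfunctor_eq_eta (X : graph) (G : groupoid) (p q : gfunctor (FG F X) G) :
  (forall v, hV (fh p) (hV (eta X) v) = hV (fh q) (hV (eta X) v)) ->
  (forall e, hE (fh p) (hE (eta X) e) = hE (fh q) (hE (eta X) e)) -> p = q.
Proof.
move=> eqV eqE; rewrite -(fg_extE p) -(fg_extE q).
by congr (fg_ext F _); apply: ghom_ext => /= [v|e]; rewrite ?eqV ?eqE.
Qed.

Section FreePath.
Variable m : nat.
Local Notation T := (FG F (gn m)).
Local Notation etaV := (hV (eta (gn m))).
Local Notation etaE := (hE (eta (gn m))).

Definition free_path_to_codiscrete : gfunctor T (codiscrete 'I_m.+1) :=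
  fg_ext F (G := codiscrete 'I_m.+1)
    (@GHom (gn m) (codiscrete_graph 'I_m.+1) id
       (fun e => (widen_ord (leqnSn m) e, lift ord0 e)) (fun _ => erefl) (fun _ => erefl)).

Local Notation E := free_path_to_codiscrete.

Lemma free_path_to_codiscrete_etaV i : hV (fh E) (etaV i) = i.
Proof. exact: (fg_ext_etaV (G := codiscrete 'I_m.+1)). Qed.

Lemma free_path_to_codiscreteE f : hE (fh E) f = (hV (fh E) (gsrc f), hV (fh E) (gtgt f)).
Proof. by apply: codiscrete_thin; rewrite ?(hsrc (fh E)) ?(htgt (fh E)). Qed.

Fixpoint prefix_arrow (k : nat) : gE T :=
  if k is k'.+1 then
    if insub k' is Some e then gpd_comp (etaE e) (prefix_arrow k') else prefix_arrow k'
  else gpd_id (etaV ord0).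

Lemma prefix_arrow_ends_inord k : k <= m ->
  gsrc (prefix_arrow k) = etaV ord0 /\ gtgt (prefix_arrow k) = etaV (inord k).
Proof.
elim: k => [|k IHk] le_k_m /=.
  by rewrite gpd_id_src gpd_id_tgt; split; congr etaV; apply: val_inj; rewrite /= inordK.
rewrite insubT /=; have [src_k tgt_k] := IHk (ltnW le_k_m).
have composable : gtgt (prefix_arrow k) = gsrc (etaE (Ordinal le_k_m)).
  by rewrite tgt_k hsrc; congr etaV; apply: val_inj; rewrite /= inordK // ltnW.
rewrite gpd_comp_src // gpd_comp_tgt // src_k htgt; split => //.
by congr etaV; apply: val_inj; rewrite /= inordK.
Qed.

Lemma prefix_arrow_ends (i : 'I_m.+1) :
  gsrc (prefix_arrow i) = etaV ord0 /\ gtgt (prefix_arrow i) = etaV i.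
Proof. by rewrite -[in etaV i](inord_val i); apply: prefix_arrow_ends_inord; rewrite -ltnS. Qed.

Definition codiscrete_arrow (p : 'I_m.+1 * 'I_m.+1) : gE T :=
  gpd_comp (prefix_arrow p.2) (gpd_inv (prefix_arrow p.1)).

Lemma codiscrete_arrow_composable (i j : 'I_m.+1) :
  gtgt (gpd_inv (prefix_arrow i)) = gsrc (prefix_arrow j).
Proof. by rewrite gpd_inv_tgt (prefix_arrow_ends i).1 (prefix_arrow_ends j).1. Qed.

Lemma codiscrete_arrow_src p : gsrc (codiscrete_arrow p) = etaV p.1.
Proof.
rewrite gpd_comp_src ?gpd_inv_src ?(prefix_arrow_ends _).2 //.
exact: codiscrete_arrow_composable.
Qed.

Lemma codiscrete_arrow_tgt p : gtgt (codiscrete_arrow p) = etaV p.2.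
Proof.
by rewrite gpd_comp_tgt ?(prefix_arrow_ends _).2 //; apply: codiscrete_arrow_composable.
Qed.

Definition codiscrete_to_free_path_hom : ghom (codiscrete_graph 'I_m.+1) T :=
  @GHom (codiscrete_graph 'I_m.+1) T etaV codiscrete_arrow
    codiscrete_arrow_src codiscrete_arrow_tgt.

Lemma codiscrete_to_free_path_id x :
  hE codiscrete_to_free_path_hom (gpd_id (g0 := codiscrete 'I_m.+1) x) =
  gpd_id (hV codiscrete_to_free_path_hom x).
Proof. by rewrite /= /codiscrete_arrow gpd_inv_r (prefix_arrow_ends x).2. Qed.

Lemma codiscrete_to_free_path_comp (f g : gE (codiscrete 'I_m.+1)) : gtgt f = gsrc g ->
  hE codiscrete_to_free_path_hom (gpd_comp g f) =
  gpd_comp (hE codiscrete_to_free_path_hom g) (hE codiscrete_to_free_path_hom f).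
Proof.
case: f g => a b [c d] /= <-{c}; rewrite /codiscrete_arrow /=.
have [src_a _] := prefix_arrow_ends a; have [src_b tgt_b] := prefix_arrow_ends b.
have [src_d _] := prefix_arrow_ends d.
rewrite -(@gpd_compA T _ (gpd_inv (prefix_arrow b))); first last.
- by rewrite gpd_inv_tgt src_b src_d.
- by rewrite gpd_comp_tgt ?gpd_inv_src // gpd_inv_tgt src_a src_b.
rewrite (@gpd_compA T (gpd_inv (prefix_arrow a))); first last.
- by rewrite gpd_inv_src.
- by rewrite gpd_inv_tgt src_a src_b.
by rewrite gpd_inv_l src_b -src_a -gpd_inv_tgt gpd_id_l.
Qed.

Definition codiscrete_to_free_path : gfunctor (codiscrete 'I_m.+1) T :=
  GFunctor codiscrete_to_free_path_id codiscrete_to_free_path_comp.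

Lemma free_path_to_codiscreteK : gfcomp codiscrete_to_free_path E = gfid T.
Proof.
apply: gfunctor_eq_eta => [v|e] /=; first by rewrite free_path_to_codiscrete_etaV.
rewrite (fg_ext_etaE (G := codiscrete 'I_m.+1)) /= /codiscrete_arrow /= add0n valK.
have [_ tgt_e] := prefix_arrow_ends (widen_ord (leqnSn m) e).
rewrite -gpd_compA ?gpd_inv_tgt ?tgt_e ?(hsrc (eta (gn m))) //.
by rewrite gpd_inv_r tgt_e -(hsrc (eta (gn m)) e) gpd_id_r.
Qed.

Lemma free_path_thin (f f' : gE T) : gsrc f = gsrc f' -> gtgt f = gtgt f' -> f = f'.
Proof.
move=> eq_src eq_tgt.
have inj := f_equal (fun p => hE (fh p) _) free_path_to_codiscreteK.
by rewrite -[f]inj -[f']inj /= !free_path_to_codiscreteE eq_src eq_tgt.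
Qed.

Lemma free_path_to_codiscreteKV o : etaV (hV (fh E) o) = o.
Proof. exact: (f_equal (fun p => hV (fh p) o) free_path_to_codiscreteK). Qed.

End FreePath.

Local Notation etaV n := (hV (eta (gn n))).
Local Notation etaE n := (hE (eta (gn n))).

Lemma gfunctor_eq_into_free_path (G : groupoid) m (p q : gfunctor G (FG F (gn m))) :
  (forall v, hV (fh p) v = hV (fh q) v) -> p = q.
Proof.
move=> eqV; apply/gfunctor_ext/ghom_ext => // e.
by apply: free_path_thin; rewrite ?(hsrc (fh p)) ?(hsrc (fh q)) ?(htgt (fh p)) ?(htgt (fh q)).
Qed.

Lemma gfunctor_eq_free_path n m (p q : gfunctor (FG F (gn n)) (FG F (gn m))) :
  (forall i, hV (fh p) (etaV n i) = hV (fh q) (etaV n i)) -> p = q.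
Proof.
by move=> eqV; apply: gfunctor_eq_into_free_path => o; rewrite -[o]free_path_to_codiscreteKV.
Qed.

Lemma gfunctor_eta_src (G : groupoid) n (p : gfunctor (FG F (gn n)) G) (k : 'I_n) :
  gsrc (hE (fh p) (etaE n k)) = hV (fh p) (etaV n (widen_ord (leqnSn n) k)).
Proof. by rewrite (hsrc (fh p)) (hsrc (eta (gn n))). Qed.

Lemma gfunctor_eta_tgt (G : groupoid) n (p : gfunctor (FG F (gn n)) G) (k : 'I_n) :
  gtgt (hE (fh p) (etaE n k)) = hV (fh p) (etaV n (lift ord0 k)).
Proof. by rewrite (htgt (fh p)) (htgt (eta (gn n))). Qed.

Definition free_path_map n m (s : 'I_n.+1 -> 'I_m.+1) : gfunctor (FG F (gn n)) (FG F (gn m)) :=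
  gfcomp (codiscrete_to_free_path m) (gfcomp (codiscrete_map s) (free_path_to_codiscrete n)).

Lemma free_path_map_etaV n m (s : 'I_n.+1 -> 'I_m.+1) i :
  hV (fh (free_path_map s)) (etaV n i) = etaV m (s i).
Proof. by rewrite /= free_path_to_codiscrete_etaV. Qed.

Lemma free_path_map_unique n m (s : 'I_n.+1 -> 'I_m.+1)
    (p : gfunctor (FG F (gn n)) (FG F (gn m))) :
  (forall i, hV (fh p) (etaV n i) = etaV m (s i)) -> p = free_path_map s.
Proof. by move=> pV; apply: gfunctor_eq_free_path => i; rewrite free_path_map_etaV pV. Qed.

Lemma Fmap_free_path n m (f : ghom (gn n) (gn m)) : Fmap F f = free_path_map (hV f).
Proof. by apply: free_path_map_unique => i; rewrite /Fmap fg_ext_etaV. Qed.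

Lemma free_path_map_comp a b c (s : 'I_a.+1 -> 'I_b.+1) (t : 'I_b.+1 -> 'I_c.+1) :
  gfcomp (free_path_map t) (free_path_map s) = free_path_map (t \o s).
Proof. by apply: free_path_map_unique => i /=; rewrite !free_path_to_codiscrete_etaV. Qed.

Lemma free_path_map_etaE a b (s : 'I_a.+1 -> 'I_b.+1) (k : 'I_a) (e : 'I_b) :
  s (widen_ord (leqnSn a) k) = widen_ord (leqnSn b) e -> s (lift ord0 k) = lift ord0 e ->
  hE (fh (free_path_map s)) (etaE a k) = etaE b e.
Proof.
move=> s_src s_tgt; apply: free_path_thin.
  by rewrite gfunctor_eta_src free_path_map_etaV s_src (hsrc (eta (gn b))).
by rewrite gfunctor_eta_tgt free_path_map_etaV s_tgt (htgt (eta (gn b))).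
Qed.

Lemma free_path_to_codiscrete_map n m (s : 'I_n.+1 -> 'I_m.+1) o :
  hV (fh (free_path_to_codiscrete m)) (hV (fh (free_path_map s)) o) =
  s (hV (fh (free_path_to_codiscrete n)) o).
Proof.
by rewrite -{1}[o]free_path_to_codiscreteKV free_path_map_etaV free_path_to_codiscrete_etaV.
Qed.

Lemma free_path_map_const_etaE m (i : 'I_m.+1) (k : 'I_1) :
  hE (fh (free_path_map (fun _ : 'I_2 => i))) (etaE 1 k) = gpd_id (etaV m i).
Proof.
by apply: free_path_thin;
  rewrite ?gfunctor_eta_src ?gfunctor_eta_tgt free_path_map_etaV ?gpd_id_src ?gpd_id_tgt.
Qed.

Lemma etaE2_composable : gtgt (etaE 2 ord0) = gsrc (etaE 2 ord_max).
Proof. by rewrite (htgt (eta (gn 2))) (hsrc (eta (gn 2))); congr (etaV 2 _); apply: val_inj. Qed.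

Lemma free_path_map_02_etaE :
  hE (fh (free_path_map (pair_map ord0 ord_max))) (etaE 1 ord0) =
  gpd_comp (etaE 2 ord_max) (etaE 2 ord0).
Proof.
apply: free_path_thin.
  rewrite gfunctor_eta_src free_path_map_etaV gpd_comp_src ?etaE2_composable //.
  by rewrite (hsrc (eta (gn 2))); congr (etaV 2 _); apply: val_inj.
rewrite gfunctor_eta_tgt free_path_map_etaV gpd_comp_tgt ?etaE2_composable //.
by rewrite (htgt (eta (gn 2))); congr (etaV 2 _); apply: val_inj.
Qed.

Section Density.
Variables G H : groupoid.
Variable alpha : forall n, pob (NKT F G) n -> pob (NKT F H) n.
Hypothesis alpha_natural : natural alpha.

Let alphaC a b (f : gfunctor (FG F (gn a)) (FG F (gn b))) (x : gfunctor (FG F (gn b)) G) :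
  alpha (gfcomp x f) = gfcomp (alpha x) f := alpha_natural f x.

Definition dense_vertex (v : gV G) : gV H :=
  hV (fh (@alpha 0 (fg_ext F (gvertex v)))) (etaV 0 ord0).

Definition dense_arrow (e : gE G) : gE H :=
  hE (fh (@alpha 1 (fg_ext F (gedge e)))) (etaE 1 ord0).

Lemma alpha_etaV n (x : gfunctor (FG F (gn n)) G) i :
  hV (fh (alpha x)) (etaV n i) = dense_vertex (hV (fh x) (etaV n i)).
Proof.
have vertexE : fg_ext F (gvertex (hV (fh x) (etaV n i))) = gfcomp x (free_path_map (fun=> i)).
  by apply: gfunctor_eq_eta => [v|[]] //=; rewrite fg_ext_etaV.
by rewrite /dense_vertex vertexE alphaC gfcompV free_path_map_etaV.
Qed.

Lemma alpha_etaE n (x : gfunctor (FG F (gn n)) G) (e : 'I_n) :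
  hE (fh (alpha x)) (etaE n e) = dense_arrow (hE (fh x) (etaE n e)).
Proof.
pose s := pair_map (widen_ord (leqnSn n) e) (lift ord0 e).
have sE : hE (fh (free_path_map s)) (etaE 1 ord0) = etaE n e by apply: free_path_map_etaE.
have edgeE : fg_ext F (gedge (hE (fh x) (etaE n e))) = gfcomp x (free_path_map s).
  apply: gfunctor_eq_eta => [v|k].
    rewrite fg_ext_etaV gfcompV free_path_map_etaV.
    by case: v => -[|[|//]] ?; rewrite /pair_map /= ?gfunctor_eta_src ?gfunctor_eta_tgt.
  by rewrite fg_ext_etaE gfcompE (ord1 k) sE.
by rewrite -{1}sE /dense_arrow edgeE alphaC.
Qed.

Lemma dense_arrow_src e : gsrc (dense_arrow e) = dense_vertex (gsrc e).
Proof. by rewrite gfunctor_eta_src alpha_etaV fg_ext_etaV. Qed.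

Lemma dense_arrow_tgt e : gtgt (dense_arrow e) = dense_vertex (gtgt e).
Proof. by rewrite gfunctor_eta_tgt alpha_etaV fg_ext_etaV. Qed.

Lemma dense_arrow_id v : dense_arrow (gpd_id v) = gpd_id (dense_vertex v).
Proof.
pose collapse := free_path_map (fun _ : 'I_2 => (ord0 : 'I_1)).
have idE : fg_ext F (gedge (gpd_id v)) = gfcomp (fg_ext F (gvertex v)) collapse.
  apply: gfunctor_eq_eta => k.
    rewrite fg_ext_etaV gfcompV free_path_map_etaV fg_ext_etaV.
    by case: k => -[|k] ?; rewrite /pair_map /= ?gpd_id_src ?gpd_id_tgt.
  by rewrite fg_ext_etaE gfcompE free_path_map_const_etaE (fid (fg_ext F (gvertex v))) fg_ext_etaV.
by rewrite /dense_arrow idE alphaC gfcompE free_path_map_const_etaE fid.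
Qed.

Lemma dense_arrow_comp f g : gtgt f = gsrc g ->
  dense_arrow (gpd_comp g f) = gpd_comp (dense_arrow g) (dense_arrow f).
Proof.
move=> fg; pose w := fg_ext F (gpath2 fg).
have compE : fg_ext F (gedge (gpd_comp g f)) = gfcomp w (free_path_map (pair_map ord0 ord_max)).
  apply: gfunctor_eq_eta => k.
    rewrite fg_ext_etaV gfcompV free_path_map_etaV fg_ext_etaV.
    by case: k => -[|[|//]] ?; rewrite /pair_map /= ?gpd_comp_src ?gpd_comp_tgt.
  by rewrite fg_ext_etaE gfcompE (ord1 k) free_path_map_02_etaE (fcomp w etaE2_composable)
    !fg_ext_etaE.
rewrite /dense_arrow compE alphaC gfcompE free_path_map_02_etaE (fcomp _ etaE2_composable).
by rewrite !alpha_etaE !fg_ext_etaE.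
Qed.

Definition dense_functor : gfunctor G H :=
  @GFunctor G H (@GHom G H dense_vertex dense_arrow dense_arrow_src dense_arrow_tgt)
    dense_arrow_id dense_arrow_comp.

Lemma dense_functorP n x : alpha x = gfcomp dense_functor x :> pob (NKT F H) n.
Proof. by apply: gfunctor_eq_eta => [v|e]; rewrite ?alpha_etaV ?alpha_etaE. Qed.

Lemma dense_functor_unique (phi : gfunctor G H) :
  (forall n x, alpha x = gfcomp phi x :> pob (NKT F H) n) -> phi = dense_functor.
Proof.
move=> phiP; apply/gfunctor_ext/ghom_ext => [v|e] /=.
  by rewrite /dense_vertex phiP /= fg_ext_etaV.
by rewrite /dense_arrow phiP /= fg_ext_etaE.
Qed.

End Density.

Lemma free_groupoid_KT_dense : KT_dense F.
Proof.
move=> G H alpha alpha_natural; exists (dense_functor alpha_natural).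
by split; [apply: dense_functorP | apply: dense_functor_unique].
Qed.

Lemma KT_nerve_restrJ (X : rpsh (AT F)) (G : groupoid) :
  nat_iso X (NKT F G) -> is_K_nerve (restrJ X).
Proof.
case=> gam [gam_natural gam_bij]; exists (gpd G).
exists (fun n (x : pob (restrJ X) n) => gcomp (fh (gam n x)) (eta (gn n)) : pob (NK G) n).
split.
  move=> a b f x /=; rewrite [gam a _]gam_natural.
  by apply: ghom_ext => [v|e] /=; rewrite /Fmap ?fg_ext_etaV ?fg_ext_etaE.
move=> n; case: (gam_bij n) => gamV gamK gamVK.
exists (fun p : pob (NK G) n => gamV (fg_ext F p)) => [x|p] /=.
  by rewrite fg_extE.
by rewrite gamVK fg_ext_eta.
Qed.

Section NerveGroupoid.
Variable X : rpsh (AT F).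
Hypothesis X_presheaf : is_presheaf X.
Variable Z : graph.
Variable alpha : forall n, pob (restrJ X) n -> pob (NK Z) n.
Hypothesis alpha_natural : natural alpha.
Hypothesis alpha_bij : forall n, bijective (@alpha n).

Local Notation act t x := (@pact (AT F) X _ _ t x).

Definition path_of n (x : pob X n) : ghom (gn n) Z := alpha x.

Lemma act_comp a b c (g : gfunctor (FG F (gn b)) (FG F (gn c)))
    (f : gfunctor (FG F (gn a)) (FG F (gn b))) x :
  act f (act g x) = act (gfcomp g f) x.
Proof. by rewrite (proj2 X_presheaf). Qed.

Lemma path_of_act_hom a b (f : ghom (gn a) (gn b)) (x : pob X b) :
  path_of (act (free_path_map (hV f)) x) = gcomp (path_of x) f.
Proof. by rewrite -Fmap_free_path; apply: alpha_natural. Qed.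

Lemma path_of_inj n : injective (@path_of n).
Proof. by case: (alpha_bij n) => g alphaK _; apply: can_inj alphaK. Qed.

Lemma path_of_surj n (p : ghom (gn n) Z) : exists x : pob X n, path_of x = p.
Proof. by case: (alpha_bij n) => g _ alphaVK; exists (g p). Qed.

Definition unpath n (p : ghom (gn n) Z) : pob X n :=
  proj1_sig (constructive_indefinite_description _ (path_of_surj p)).

Lemma unpathK n (p : ghom (gn n) Z) : path_of (unpath p) = p.
Proof. exact: proj2_sig (constructive_indefinite_description _ (path_of_surj p)). Qed.

Definition xvertex m (x : pob X m) (i : 'I_m.+1) : gV Z :=
  hV (path_of (act (free_path_map (fun _ : 'I_1 => i)) x)) ord0.

Definition xarrow m (x : pob X m) (i j : 'I_m.+1) : gE Z :=
  hE (path_of (act (free_path_map (pair_map i j)) x)) ord0.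

Lemma xvertexE m (x : pob X m) i : xvertex x i = hV (path_of x) i.
Proof. by rewrite /xvertex (path_of_act_hom (gvertex (Z := gn m) i)). Qed.

Lemma xarrowE m (x : pob X m) (e : 'I_m) :
  xarrow x (widen_ord (leqnSn m) e) (lift ord0 e) = hE (path_of x) e.
Proof. by rewrite /xarrow (path_of_act_hom (gedge (Z := gn m) e)). Qed.

Lemma xvertex_act n m (s : 'I_n.+1 -> 'I_m.+1) (x : pob X m) i :
  xvertex (act (free_path_map s) x) i = xvertex x (s i).
Proof. by rewrite /xvertex act_comp free_path_map_comp. Qed.

Lemma xarrow_act n m (s : 'I_n.+1 -> 'I_m.+1) (x : pob X m) i j :
  xarrow (act (free_path_map s) x) i j = xarrow x (s i) (s j).
Proof.
rewrite /xarrow act_comp free_path_map_comp; congr (hE (path_of (act (free_path_map _) x)) _).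
by apply: functional_extensionality => -[[|k] ?].
Qed.

Lemma xarrow_src m (x : pob X m) i j : gsrc (xarrow x i j) = xvertex x i.
Proof. by rewrite /xarrow (hsrc (path_of _)) -xvertexE xvertex_act. Qed.

Lemma xarrow_tgt m (x : pob X m) i j : gtgt (xarrow x i j) = xvertex x j.
Proof. by rewrite /xarrow (htgt (path_of _)) -xvertexE xvertex_act. Qed.

Lemma unpath_act n m (p : ghom (gn n) Z) (s : 'I_n.+1 -> 'I_m.+1) (x : pob X m) :
  (forall k, hV p k = xvertex x (s k)) ->
  (forall e, hE p e = xarrow x (s (widen_ord (leqnSn n) e)) (s (lift ord0 e))) ->
  unpath p = act (free_path_map s) x.
Proof.
move=> pV pE; apply: path_of_inj; rewrite unpathK.
by apply: ghom_ext => [k|e]; rewrite ?pV ?pE -?xvertexE -?xarrowE ?xvertex_act ?xarrow_act.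
Qed.

Definition nerve_id (v : gV Z) : gE Z := xarrow (unpath (gvertex v)) ord0 ord0.

Definition nerve_inv (f : gE Z) : gE Z := xarrow (unpath (gedge f)) ord_max ord0.

(* Off composable pairs the value is irrelevant; [f] is a convenient junk value. *)
Definition nerve_comp (g f : gE Z) : gE Z :=
  if excluded_middle_informative (gtgt f = gsrc g) is left fg
  then xarrow (unpath (gpath2 fg)) ord0 ord_max else f.

Lemma nerve_idE m (x : pob X m) i : nerve_id (xvertex x i) = xarrow x i i.
Proof. by rewrite /nerve_id (@unpath_act _ _ _ (fun=> i) x) ?xarrow_act //; case. Qed.

Lemma nerve_invE m (x : pob X m) i j : nerve_inv (xarrow x i j) = xarrow x j i.
Proof.
rewrite /nerve_inv (@unpath_act _ _ _ (pair_map i j) x) ?xarrow_act //.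
  by case=> -[|[|//]] ?; rewrite /= ?xarrow_src ?xarrow_tgt.
by move=> e; rewrite (ord1 e).
Qed.

Lemma nerve_compE m (x : pob X m) i j k :
  nerve_comp (xarrow x j k) (xarrow x i j) = xarrow x i k.
Proof.
rewrite /nerve_comp; case: excluded_middle_informative => [fg|]; last first.
  by rewrite xarrow_tgt xarrow_src.
rewrite (@unpath_act _ _ _ (triple_map i j k) x) ?xarrow_act //.
  by case=> -[|[|[|//]]] ?; rewrite /= ?xarrow_src ?xarrow_tgt.
by case=> -[|[|//]] ?.
Qed.

Lemma xarrow_surj f : exists x : pob X 1, xarrow x ord0 ord_max = f.
Proof.
exists (unpath (gedge f)).
have arrowE := xarrowE (unpath (gedge f)) ord0; rewrite unpathK /= in arrowE.
by rewrite -[RHS]arrowE; congr xarrow; apply: val_inj.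
Qed.

Lemma nerve_id_src v : gsrc (nerve_id v) = v.
Proof. by rewrite xarrow_src xvertexE unpathK. Qed.

Lemma nerve_id_tgt v : gtgt (nerve_id v) = v.
Proof. by rewrite xarrow_tgt xvertexE unpathK. Qed.

Lemma nerve_comp_src f g : gtgt f = gsrc g -> gsrc (nerve_comp g f) = gsrc f.
Proof.
by move=> fg; rewrite /nerve_comp; case: excluded_middle_informative => // ?;
  rewrite xarrow_src xvertexE unpathK.
Qed.

Lemma nerve_comp_tgt f g : gtgt f = gsrc g -> gtgt (nerve_comp g f) = gtgt g.
Proof.
by move=> fg; rewrite /nerve_comp; case: excluded_middle_informative => // ?;
  rewrite xarrow_tgt xvertexE unpathK.
Qed.

Lemma nerve_compA f g h : gtgt f = gsrc g -> gtgt g = gsrc h ->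
  nerve_comp h (nerve_comp g f) = nerve_comp (nerve_comp h g) f.
Proof.
move=> fg gh; pose es k := match k with 0 => f | 1 => g | _ => h end.
have [p pE] := @gpath_exists Z 3 es
  (fun k => match k with 0 => fun _ => fg | 1 => fun _ => gh
                       | _ => fun lt_k => False_ind _ (notF lt_k) end).
have [y yp] := path_of_surj p.
have arrowE (e : 'I_3) : xarrow y (inord e) (inord e.+1) = es e.
  rewrite -pE -yp -xarrowE.
  congr xarrow; apply: ord_inj => /=; first by rewrite inordK // leqW.
  by rewrite inordK // ltnS ltn_ord.
move: (arrowE (@Ordinal 3 0 isT)) (arrowE (@Ordinal 3 1 isT)) (arrowE (@Ordinal 3 2 isT)).
by rewrite /es /= => <- <- <-; rewrite !nerve_compE.
Qed.

Lemma nerve_id_l f : nerve_comp (nerve_id (gtgt f)) f = f.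
Proof. by have [x <-] := xarrow_surj f; rewrite xarrow_tgt nerve_idE nerve_compE. Qed.

Lemma nerve_id_r f : nerve_comp f (nerve_id (gsrc f)) = f.
Proof. by have [x <-] := xarrow_surj f; rewrite xarrow_src nerve_idE nerve_compE. Qed.

Lemma nerve_inv_src f : gsrc (nerve_inv f) = gtgt f.
Proof. by have [x <-] := xarrow_surj f; rewrite nerve_invE xarrow_src xarrow_tgt. Qed.

Lemma nerve_inv_tgt f : gtgt (nerve_inv f) = gsrc f.
Proof. by have [x <-] := xarrow_surj f; rewrite nerve_invE xarrow_src xarrow_tgt. Qed.

Lemma nerve_inv_l f : nerve_comp (nerve_inv f) f = nerve_id (gsrc f).
Proof. by have [x <-] := xarrow_surj f; rewrite nerve_invE nerve_compE xarrow_src nerve_idE. Qed.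

Lemma nerve_inv_r f : nerve_comp f (nerve_inv f) = nerve_id (gtgt f).
Proof. by have [x <-] := xarrow_surj f; rewrite nerve_invE nerve_compE xarrow_tgt nerve_idE. Qed.

Definition nerve_groupoid : groupoid :=
  @Groupoid Z nerve_id nerve_comp nerve_inv nerve_id_src nerve_id_tgt nerve_comp_src
    nerve_comp_tgt nerve_compA nerve_id_l nerve_id_r nerve_inv_src nerve_inv_tgt
    nerve_inv_l nerve_inv_r.

Definition codiscrete_to_nerve_hom m (x : pob X m) : ghom (codiscrete_graph 'I_m.+1) Z :=
  @GHom (codiscrete_graph 'I_m.+1) Z (xvertex x) (fun p => xarrow x p.1 p.2)
    (fun p => xarrow_src x p.1 p.2) (fun p => xarrow_tgt x p.1 p.2).

Lemma codiscrete_to_nerve_comp m (x : pob X m) (p q : gE (codiscrete 'I_m.+1)) :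
  gtgt p = gsrc q -> hE (codiscrete_to_nerve_hom x) (gpd_comp q p) =
  gpd_comp (g0 := nerve_groupoid) (hE (codiscrete_to_nerve_hom x) q)
    (hE (codiscrete_to_nerve_hom x) p).
Proof. by case: p q => i j [_ k] /= <-; rewrite nerve_compE. Qed.

Definition codiscrete_to_nerve m (x : pob X m) :
    gfunctor (codiscrete 'I_m.+1) nerve_groupoid :=
  @GFunctor (codiscrete 'I_m.+1) nerve_groupoid (codiscrete_to_nerve_hom x)
    (fun i => esym (nerve_idE x i)) (@codiscrete_to_nerve_comp m x).

Definition nerve_functor m (x : pob X m) : pob (NKT F nerve_groupoid) m :=
  gfcomp (codiscrete_to_nerve x) (free_path_to_codiscrete m).

Lemma nerve_functorV m (x : pob X m) o :
  hV (fh (nerve_functor x)) o = xvertex x (hV (fh (free_path_to_codiscrete m)) o).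
Proof. by []. Qed.

Lemma nerve_functorE m (x : pob X m) f :
  hE (fh (nerve_functor x)) f = xarrow x (hV (fh (free_path_to_codiscrete m)) (gsrc f))
                                         (hV (fh (free_path_to_codiscrete m)) (gtgt f)).
Proof. by rewrite gfcompE free_path_to_codiscreteE. Qed.

Lemma nerve_functor_eta m (x : pob X m) :
  gcomp (fh (nerve_functor x)) (eta (gn m)) = path_of x.
Proof.
apply: ghom_ext => [i|e] /=; first by rewrite free_path_to_codiscrete_etaV xvertexE.
by rewrite (fg_ext_etaE (G := codiscrete _)) /= xarrowE.
Qed.

Lemma nerve_functor_natural : natural nerve_functor.
Proof.
move=> a b th x; change (nerve_functor (act th x) = gfcomp (nerve_functor x) th).
pose s i := hV (fh (free_path_to_codiscrete b)) (hV (fh th) (etaV a i)).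
have -> : th = free_path_map s.
  by apply: free_path_map_unique => i; rewrite free_path_to_codiscreteKV.
apply/gfunctor_ext/ghom_ext => [o|f].
  by rewrite gfcompV !nerve_functorV xvertex_act free_path_to_codiscrete_map.
rewrite gfcompE !nerve_functorE xarrow_act (hsrc (fh _)) (htgt (fh _)).
by rewrite !free_path_to_codiscrete_map.
Qed.

Lemma nerve_functor_bij n : bijective (@nerve_functor n).
Proof.
exists (fun p : pob (NKT F nerve_groupoid) n => unpath (gcomp (fh p) (eta (gn n)))) => [x|p].
  by apply: path_of_inj; rewrite unpathK nerve_functor_eta.
by rewrite (fg_ext_unique (nerve_functor_eta _)) unpathK fg_extE.
Qed.

Lemma restrJ_K_nerve_KT_nerve : is_KT_nerve X.
Proof.
exists nerve_groupoid, nerve_functor.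
by split; [apply: nerve_functor_natural | apply: nerve_functor_bij].
Qed.

End NerveGroupoid.

Lemma free_groupoid_nervous : Delta0_nervous F.
Proof.
split; first exact: free_groupoid_KT_dense.
move=> X X_presheaf; split; first by case=> G; apply: KT_nerve_restrJ.
by case=> Z [alpha [alpha_natural alpha_bij]]; apply: restrJ_K_nerve_KT_nerve alpha_bij.
Qed.

Definition cospan : graph := @Graph nat bool (fun e => if e then 2 else 0) (fun _ => 1).

Definition avoids02 (p : nat * nat) : bool := (p != (0, 2)) && (p != (2, 0)).

Definition codiscrete_minus02 : graph :=
  @Graph nat {p : nat * nat | avoids02 p} (fun e => (sval e).1) (fun e => (sval e).2).

Lemma no_arrow02 (e : gE codiscrete_minus02) : gsrc e = 0 -> gtgt e = 2 -> False.
Proof. by case: e => -[a b] /= ab a0 b2; rewrite a0 b2 in ab. Qed.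

Lemma cospan_path_vertex n (x : ghom (gn n) cospan) i : hV x i = hV x ord0 \/ hV x i = 1.
Proof.
case: i => -[|k] lt_k; first by left; congr (hV x _); apply: val_inj.
right; have /= -> := htgt x (Ordinal (lt_k : k < n)).
by congr (hV x _); apply: val_inj.
Qed.

Lemma cospan_path_avoids02 n (x : ghom (gn n) cospan) i j : avoids02 (hV x i, hV x j).
Proof.
by case: (cospan_path_vertex x i) (cospan_path_vertex x j) => -> [] ->;
  rewrite /avoids02 !xpair_eqE ?eqxx ?andbF //=; case: (hV x ord0) => [|[|[]]].
Qed.

Definition cospan_path_arrows n (x : ghom (gn n) cospan) :
    ghom (codiscrete_graph 'I_n.+1) codiscrete_minus02 :=
  @GHom (codiscrete_graph 'I_n.+1) codiscrete_minus02 (hV x)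
    (fun p => exist _ (hV x p.1, hV x p.2) (cospan_path_avoids02 x p.1 p.2))
    (fun _ => erefl) (fun _ => erefl).

Definition cospan_cocone n (x : ghom (gn n) cospan) : ghom (Tob F (gn n)) codiscrete_minus02 :=
  gcomp (cospan_path_arrows x) (fh (free_path_to_codiscrete n)).

Lemma cospan_cocone_natural n m (f : ghom (gn n) (gn m)) (y : ghom (gn m) cospan) :
  cospan_cocone (gcomp y f) = gcomp (cospan_cocone y) (Tmap F f).
Proof.
rewrite /cospan_cocone /Tmap Fmap_free_path.
move: (free_path_map _) (free_path_to_codiscrete_map (hV f)) => g gP.
apply: ghom_ext => [o|e] /=; first by rewrite gP.
by apply: val_inj; rewrite /= !free_path_to_codiscreteE /= (hsrc (fh g)) (htgt (fh g)) !gP.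
Qed.

Lemma cospan_cocone_vertex n (x : ghom (gn n) cospan) i :
  hV (cospan_cocone x) (etaV n i) = hV x i.
Proof. by rewrite /= free_path_to_codiscrete_etaV. Qed.

Definition zigzag : gE (Tob F cospan) :=
  gpd_comp (gpd_inv (hE (eta cospan) true)) (hE (eta cospan) false).

Lemma zigzag_composable : gtgt (hE (eta cospan) false) = gsrc (gpd_inv (hE (eta cospan) true)).
Proof. by rewrite gpd_inv_src !(htgt (eta cospan)). Qed.

Lemma zigzag_src : gsrc zigzag = hV (eta cospan) 0.
Proof. by rewrite gpd_comp_src ?zigzag_composable // (hsrc (eta cospan)). Qed.

Lemma zigzag_tgt : gtgt zigzag = hV (eta cospan) 2.
Proof. by rewrite gpd_comp_tgt ?zigzag_composable // gpd_inv_tgt (hsrc (eta cospan)). Qed.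

Lemma Tmap_gvertex_eta (Y : graph) (v : gV Y) :
  hV (Tmap F (gvertex v)) (etaV 0 ord0) = hV (eta Y) v.
Proof. by rewrite /Tmap /Fmap fg_ext_etaV. Qed.

Lemma free_groupoid_not_induced : ~ Delta0_induced F.
Proof.
move=> induced; have [u [uP _]] := induced _ _ _ cospan_cocone_natural.
have u_eta v : hV u (hV (eta cospan) v) = v.
  by rewrite -Tmap_gvertex_eta -[hV u _]/(hV (gcomp u _) _) uP cospan_cocone_vertex.
apply: (@no_arrow02 (hE u zigzag)).
  by rewrite (hsrc u) zigzag_src u_eta.
by rewrite (htgt u) zigzag_tgt u_eta.
Qed.

Lemma NK_presheaf (Y : graph) : is_presheaf (NK Y).
Proof. by split=> *; apply: ghom_ext. Qed.

Lemma free_groupoid_no_arities : ~ has_arities F.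
Proof.
move=> arities.
pose c n (x : ghom (gn n) cospan) k (g : pob (NK (Tob F (gn n))) k) :=
  gcomp (cospan_cocone x) g : pob (NK codiscrete_minus02) k.
have c_natural n x : natural (c n x) by move=> a b f g; apply: ghom_ext.
have c_cocone n m f y k g : c n (gcomp y f) k g = c m y k (gcomp (Tmap F f) g).
  by rewrite /c cospan_cocone_natural; apply: ghom_ext.
have [u [u_natural [uP _]]] := arities _ _ (NK_presheaf _) c c_natural c_cocone.
pose z := gedge zigzag.
have u_vertex (i : 'I_2) v : hV z i = hV (eta cospan) v -> hV (u 1 z) i = v.
  move=> zi; have := u_natural 0 1 (gvertex (Z := gn 1) i) z.
  have -> : @pact _ (NK _) 0 1 (gvertex (Z := gn 1) i) z =
            gcomp (Tmap F (gvertex v)) (gvertex (etaV 0 ord0)).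
    by apply: ghom_ext => [k|[]] //=; rewrite -[LHS]/(hV z i) zi Tmap_gvertex_eta.
  by rewrite uP => /(f_equal (fun h : ghom (gn 0) codiscrete_minus02 => hV h ord0)) /= <-.
apply: (@no_arrow02 (hE (u 1 z) ord0)).
  by rewrite (hsrc (u 1 z)); apply: u_vertex; rewrite -zigzag_src.
by rewrite (htgt (u 1 z)); apply: u_vertex; rewrite -zigzag_tgt.
Qed.

End FreeGroupoid.

Theorem proposition7p4 (F : free_groupoid) :
  Delta0_nervous F /\ ~ Delta0_induced F /\ ~ has_arities F.
Proof.
split; first exact: free_groupoid_nervous.
by split; [apply: free_groupoid_not_induced | apply: free_groupoid_no_arities].
Qed.
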